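(* Let $M$ be a nonempty Hausdorff space and $\sigma:\mathbb{R}\to\mathcal{T}(M)$ a spectral family in $\mathcal{T}(M)$, with admissible domain $\mathcal{D}(\sigma)$ and induced function $f_\sigma:\mathcal{D}(\sigma)\to\mathbb{R}$. Then $sp(\sigma)=\overline{f_\sigma(\mathcal{D}(\sigma))}$.
   Context: $\mathcal{T}(M)$ is the complete lattice of open subsets of $M$ with $\bigvee_k U_k=\bigcup_k U_k$ and $\bigwedge_k U_k=\mathrm{int}(\bigcap_k U_k)$. A spectral family in $\mathcal{T}(M)$ is a map $\sigma:\mathbb{R}\to\mathcal{T}(M)$ with $\sigma(\lambda)\subseteq\sigma(\mu)$ for $\lambda\le\mu$, $\sigma(\lambda)=\mathrm{int}\bigcap_{\mu>\lambda}\sigma(\mu)$ for all $\lambda$, $\mathrm{int}\bigcap_\lambda\sigma(\lambda)=\emptyset$ and $\bigcup_\lambda\sigma(\lambda)=M$. The admissible domain is $\mathcal{D}(\sigma):=M\setminus\bigcap_{\lambda\in\mathbb{R}}\sigma(\lambda)$, and $f_\sigma(x):=\inf\{\lambda : x\in\sigma(\lambda)\}$ for $x\in\mathcal{D}(\sigma)$. The resolvent set $R(\sigma)$ is the set of $\lambda\in\mathbb{R}$ such that $\sigma$ is constant on a neighbourhood of $\lambda$, and $sp(\sigma):=\mathbb{R}\setminus R(\sigma)$. *)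

From mathcomp Require Import all_boot all_order all_algebra.
From mathcomp Require Import all_classical all_reals all_analysis.
Set Implicit Arguments. Unset Strict Implicit. Unset Printing Implicit Defensive.
Import Order.TTheory GRing.Theory Num.Theory.
Import numFieldTopology.Exports.
Local Open Scope classical_set_scope.
Local Open Scope ring_scope.

(* Spectral family in the lattice T(M) of open subsets of M.
   Meets in T(M) are interiors of intersections. *)
Definition spectral_family {R : realType} {M : topologicalType}
  (sigma : R -> set M) : Prop :=
  [/\ (forall l, open (sigma l)),
      (forall l m, l <= m -> sigma l `<=` sigma m),
      (forall l, sigma l = interior (\bigcap_(m in `]l, +oo[) sigma m)),
      interior (\bigcap_(l : R) sigma l) = set0
    & \bigcup_(l : R) sigma l = [set: M]].

Definition adm_domain {R : realType} {M : topologicalType}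
  (sigma : R -> set M) : set M :=
  ~` \bigcap_(l : R) sigma l.

(* f_sigma x = inf { l | x in sigma l } (meaningful for x in D(sigma)) *)
Definition f_sigma {R : realType} {M : topologicalType}
  (sigma : R -> set M) (x : M) : R :=
  inf [set l : R | sigma l x].

Definition resolvent {R : realType} {M : topologicalType}
  (sigma : R -> set M) : set R :=
  [set l : R | \forall m \near l, sigma m = sigma l].

Definition spectrum {R : realType} {M : topologicalType}
  (sigma : R -> set M) : set R :=
  ~` resolvent sigma.

From mathcomp Require Import all_boot all_order all_algebra.
From mathcomp Require Import all_classical all_reals all_analysis.
From mathcomp Require Import lra.
Set Implicit Arguments. Unset Strict Implicit. Unset Printing Implicit Defensive.
Import numFieldTopology.Exports.
Import Order.TTheory GRing.Theory Num.Theory.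
Local Open Scope classical_set_scope.
Local Open Scope ring_scope.

(* Hence [sigma] is constant on an interval
   exactly when no value of [f_sigma] falls inside it, i.e. the resolvent set
   is the complement of the closure of the range of [f_sigma]. *)

Section SpectralFamilyLevels.
Variables (R : realType) (M : topologicalType) (sigma : R -> set M).
Hypothesis sigma_mono : forall l m, l <= m -> sigma l `<=` sigma m.
Hypothesis sigma_cover : \bigcup_(l : R) sigma l = [set: M].

Lemma adm_domain_has_inf x : adm_domain sigma x -> has_inf [set l | sigma l x].
Proof.
move=> adm_x; split.
  by have /(congr1 (@^~ x)) := sigma_cover; rewrite propeqE => -[_ /(_ I) [l _]]; exists l.
have [l0 nx] : exists l0, ~ sigma l0 x.
  by apply: contrapT => /forallNP nx; apply: adm_x => l _; exact: contrapT (nx l).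
exists l0 => l sx; rewrite /mkset; apply: contrapT => /negP; rewrite -ltNge => lt_l.
exact: nx (sigma_mono (ltW lt_l) sx).
Qed.

Lemma f_sigma_le x l : adm_domain sigma x -> sigma l x -> f_sigma sigma x <= l.
Proof. by move=> adm_x sx; apply: (ge_inf (adm_domain_has_inf adm_x).2). Qed.

Lemma f_sigma_lt_mem x l : adm_domain sigma x -> f_sigma sigma x < l -> sigma l x.
Proof.
move=> adm_x lt_f; have e_gt0 : 0 < l - f_sigma sigma x by rewrite subr_gt0.
have [m sx lt_m] := inf_adherent e_gt0 (adm_domain_has_inf adm_x).
apply: (sigma_mono _ sx); apply: ltW; rewrite -/(f_sigma sigma x) in lt_m; lra.
Qed.

Lemma f_sigma_notin_flat a b x : sigma b `<=` sigma a -> adm_domain sigma x ->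
  ~ (a < f_sigma sigma x < b).
Proof.
move=> sba adm_x /andP[lt_a lt_b].
have := f_sigma_le adm_x (sba _ (f_sigma_lt_mem adm_x lt_b)); lra.
Qed.

Lemma flat_of_f_sigma_notin a b :
  (forall x, adm_domain sigma x -> ~ (a <= f_sigma sigma x <= b)) ->
  sigma b `<=` sigma a.
Proof.
move=> notin x sx; have [adm_x|] := pselect (adm_domain sigma x); last first.
  by move/contrapT; apply.
apply: (f_sigma_lt_mem adm_x); rewrite ltNge; apply/negP => le_a.
by apply: (notin x adm_x); rewrite le_a (f_sigma_le adm_x sx).
Qed.

Lemma ball_constant_f_sigma_notin (c e : R) :
  (forall m, ball c e m -> sigma m = sigma c) ->
  forall x, adm_domain sigma x -> ~ ball c e (f_sigma sigma x).
Proof.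
rewrite -ball_normE /= => flat x adm_x /ltr_normlP [h1 h2].
set t := f_sigma sigma x in h1 h2.
have inball y : c - e < y < c + e -> `|c - y| < e.
  by move=> /andP[? ?]; apply/ltr_normlP; split; lra.
apply: (@f_sigma_notin_flat ((c - e + t) / 2) ((t + c + e) / 2) x _ adm_x).
  by rewrite !flat ?inball //; apply/andP; split; lra.
by apply/andP; split; rewrite /t; lra.
Qed.

Lemma f_sigma_notin_ball_constant (c e : R) :
  (forall x, adm_domain sigma x -> ~ ball c e (f_sigma sigma x)) ->
  forall m, ball c e m -> sigma m = sigma c.
Proof.
rewrite -ball_normE /= => notin.
suff sub a b : `|c - a| < e -> `|c - b| < e -> sigma b `<=` sigma a.
  move=> m cm; have cc : `|c - c| < e by rewrite subrr normr0 (le_lt_trans _ cm).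
  by apply/seteqP; split; apply: sub.
move=> /ltr_normlP[a1 a2] /ltr_normlP[b1 b2]; apply: flat_of_f_sigma_notin.
move=> x adm_x /andP[le_a le_b]; apply: (notin x adm_x).
by apply/ltr_normlP; split; lra.
Qed.

End SpectralFamilyLevels.

Theorem proposition2p33 (R : realType) (M : topologicalType)
  (hM : hausdorff_space M) (hne : [set: M] !=set0)
  (sigma : R -> set M) (hs : spectral_family sigma) :
  spectrum sigma = closure (f_sigma sigma @` adm_domain sigma).
Proof.
have [_ mono _ _ cover] := hs.
apply/seteqP; split => l.
- move=> not_res B /nbhs_ballP [e e_gt0 sub_B].
  apply: contrapT => /forallNP disj; apply: not_res; apply/nbhs_ballP.
  exists e => // m lm; apply: (f_sigma_notin_ball_constant mono cover _ lm).
  move=> x adm_x lx.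
  by apply: (disj (f_sigma sigma x)); split; [exists x | exact: sub_B].
- move=> cl_l /nbhs_ballP [e e_gt0 flat].
  have [_ [[x adm_x <-] lx]] := cl_l _ (nbhsx_ballx l e e_gt0).
  exact: (ball_constant_f_sigma_notin mono cover flat adm_x lx).
Qed.
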